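(* Let $G$ be a finite group, $N\trianglelefteq G$, $\widetilde{G}\leq G$ and $H\leq G$. Set $M:=N\cap H$, $\widetilde{H}:=\widetilde{G}\cap H$, $\widetilde{M}:=\widetilde{G}\cap M$ and $\widetilde{N}:=\widetilde{G}\cap N$, and assume $G=NH$, $H=\widetilde{H}M$ and $\mathbf{C}_G(N)\leq H$. Let $\widetilde{\vartheta}\in\mathrm{Irr}(\widetilde{N})$ and $\widetilde{\varphi}\in\mathrm{Irr}(\widetilde{M})$ be such that $\vartheta:=\widetilde{\vartheta}^{N}\in\mathrm{Irr}(N)$, $\varphi:=\widetilde{\varphi}^{M}\in\mathrm{Irr}(M)$ and $(\widetilde{G},\widetilde{N},\widetilde{\vartheta})\geq_c(\widetilde{H},\widetilde{M},\widetilde{\varphi})$. Assume that for every $N\leq J\leq G$, with $\widetilde{J}:=J\cap\widetilde{G}$, induction of characters gives bijections $\mathrm{Irr}(\widetilde{J}\mid\widetilde{\vartheta})\to\mathrm{Irr}(J\mid\vartheta)$ and $\mathrm{Irr}(\widetilde{J}\cap H\mid\widetilde{\varphi})\to\mathrm{Irr}(J\cap H\mid\varphi)$. Then $(G,N,\vartheta)\geq_c(H,M,\varphi)$.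
   Context: $\mathrm{Irr}(X\mid\theta)$ denotes the set of irreducible characters of $X$ whose restriction to the normal subgroup on which $\theta$ is defined has $\theta$ as a constituent; $\psi^X$ denotes induction. Character triples and $\geq_c$: a character triple $(G,N,\vartheta)$ consists of $N\trianglelefteq G$ and a $G$-invariant $\vartheta\in\mathrm{Irr}(N)$. A projective representation of $G$ associated with $\vartheta$ is a map $\mathcal{P}:G\to\mathrm{GL}_{\vartheta(1)}(\mathbb{C})$ with $\mathcal{P}(x)\mathcal{P}(y)=\alpha(x,y)\mathcal{P}(xy)$ for a factor set $\alpha$, such that $\mathcal{P}|_N$ is a representation affording $\vartheta$ and $\mathcal{P}(xn)=\mathcal{P}(x)\mathcal{P}(n)$, $\mathcal{P}(nx)=\mathcal{P}(n)\mathcal{P}(x)$ for $x\in G,n\in N$. One writes $(G,N,\vartheta)\geq_c(H,M,\varphi)$ for character triples if $G=NH$, $M=N\cap H$, $\mathbf{C}_G(N)\leq H$, and there are projective representations $\mathcal{P}$ of $G$ associated with $\vartheta$ and $\mathcal{P}'$ of $H$ associated with $\varphi$, with factor sets $\alpha,\alpha'$, such that $\alpha|_{H\times H}=\alpha'$ and for every $c\in\mathbf{C}_G(N)$ the matrices $\mathcal{P}(c)$, $\mathcal{P}'(c)$ are scalar with the same scalar. *)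

From HB Require Import structures.
From mathcomp Require Import all_boot all_order all_algebra all_fingroup all_solvable all_field all_character.
Set Implicit Arguments. Unset Strict Implicit. Unset Printing Implicit Defensive.
Import GRing.Theory Num.Theory.
Local Open Scope ring_scope.

Section CharTriples.
Variable gT : finGroupType.

Definition char_triple (G N : {group gT}) (theta : 'CF(N)) : Prop :=
  [/\ (N <| G)%g, theta \in irr N & forall x, x \in G -> (theta ^ x)%CF = theta].

Definition proj_rep_assoc (G N : {group gT}) (theta : 'CF(N)) (n : nat)
    (P : gT -> 'M[algC]_n) (alpha : gT -> gT -> algC) : Prop :=
  [/\ theta 1%g = n%:R,
      forall x, x \in G -> P x \in unitmx,
      forall x y, x \in G -> y \in G ->
        alpha x y != 0 /\ P x *m P y = alpha x y *: P (x * y)%g,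
      [/\ P 1%g = 1%:M,
          forall x y, x \in N -> y \in N -> P (x * y)%g = P x *m P y
        & forall x, x \in N -> \tr (P x) = theta x]
    & forall x m, x \in G -> m \in N ->
        P (x * m)%g = P x *m P m /\ P (m * x)%g = P m *m P x].

Definition ge_c (G N : {group gT}) (theta : 'CF(N))
    (H M : {group gT}) (phi : 'CF(M)) : Prop :=
  [/\ char_triple G theta, char_triple H phi,
      [/\ (N * H)%g = G :> {set gT}, M :=: N :&: H & ('C_G(N) \subset H)%g]
    & exists (n m : nat) (P : gT -> 'M[algC]_n) (alpha : gT -> gT -> algC)
             (P' : gT -> 'M[algC]_m) (alpha' : gT -> gT -> algC),
        [/\ proj_rep_assoc G theta P alpha,
            proj_rep_assoc H phi P' alpha',
            (forall x y, x \in H -> y \in H -> alpha x y = alpha' x y)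
          & forall c, c \in ('C_G(N))%g ->
              exists a : algC, P c = a%:M /\ P' c = a%:M]].

Definition Irr_over (J N : {group gT}) (theta : 'CF(N)) (chi : 'CF(J)) : bool :=
  (chi \in irr J) && ('['Res[N] chi, theta] != 0).

Definition ind_bij (K A : {group gT}) (a : 'CF(A))
    (L B : {group gT}) (b : 'CF(B)) : Prop :=
  [/\ forall psi : 'CF(K), Irr_over a psi -> Irr_over b ('Ind[L] psi),
      forall psi1 psi2 : 'CF(K), Irr_over a psi1 -> Irr_over a psi2 ->
        'Ind[L] psi1 = 'Ind[L] psi2 -> psi1 = psi2
    & forall chi : 'CF(L), Irr_over b chi ->
        exists2 psi : 'CF(K), Irr_over a psi & 'Ind[L] psi = chi].

End CharTriples.

From HB Require Import structures.
From mathcomp Require Import all_boot all_order all_algebra all_fingroup all_solvable all_field all_character.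
Set Implicit Arguments. Unset Strict Implicit. Unset Printing Implicit Defensive.
Import GRing.Theory Num.Theory.
Local Open Scope ring_scope.

(* Let K be a supplement of the normal subgroup N of G (G = KN) and A = K ∩ N.  A
   projective representation P~ of K associated with th ∈ Irr(A), with factor set al,
   induces one of G associated with th^N: for a right transversal (t_a) of A in N, its
   (a, b) block is P~(t_a g t_b^-1) if this element lies in K, and 0 otherwise.  Its
   factor set at (g, h) is al(u, v) for any u ∈ K ∩ gN and v ∈ K ∩ hN, as al is constant
   on cosets of A.  If th^N is irreducible, an element c of C_G(N) acts by a scalar
   (Schur); were c ∉ K, all diagonal blocks of its image would vanish and the scalar
   would be 0.  So C_G(N) ≤ K, and there the image of c is block diagonal with blocks
   P~(c).  Applying this to G over G~ and to H over H~ = G~ ∩ H, the two factor sets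
   agree on H because u and v can be chosen in H~, and on C_G(N) ≤ G~ ∩ H both images
   are the common scalar of P~ and P~'. *)

Lemma scalemx_unitmx_inj (F : fieldType) n (X : 'M[F]_n) (c d : F) :
  n%:R != 0 :> F -> X \in unitmx -> c *: X = d *: X -> c = d.
Proof.
move=> n_neq0 uX /(congr1 (mulmx^~ (invmx X))).
rewrite -!scalemxAl mulmxV // => /(congr1 mxtrace).
by rewrite !mxtraceZ mxtrace1 => /mulIf; apply.
Qed.

Lemma mxblockZ (R : pzSemiRingType) p q (p_ : 'I_p -> nat) (q_ : 'I_q -> nat)
    (c : R) (B_ : forall i j, 'M[R]_(p_ i, q_ j)) :
  \mxblock_(i, j) (c *: B_ i j) = c *: \mxblock_(i, j) B_ i j.
Proof. by apply/matrixP => s t; rewrite !mxE. Qed.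

Section FactorSet.
Variables (gT : finGroupType) (K A : {group gT}) (th : 'CF(A)) (m : nat).
Variables (Pt : gT -> 'M[algC]_m) (al : gT -> gT -> algC).
Hypotheses (nAK : (A <| K)%g) (th_irr : th \in irr A) (HPt : proj_rep_assoc K th Pt al).

Lemma proj_rep1 : Pt 1%g = 1%:M. Proof. by case: HPt => _ _ _ []. Qed.

Lemma proj_rep_unit x : x \in K -> Pt x \in unitmx.
Proof. by case: HPt => _ + _ _ _; apply. Qed.

Lemma proj_repM x y : x \in K -> y \in K -> Pt x *m Pt y = al x y *: Pt (x * y)%g.
Proof. by case: HPt => _ _ + _ _ Kx Ky => /(_ x y Kx Ky)[]. Qed.

Lemma factor_set_neq0 x y : x \in K -> y \in K -> al x y != 0.
Proof. by case: HPt => _ _ + _ _ Kx Ky => /(_ x y Kx Ky)[]. Qed.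

Lemma proj_repMr x a : x \in K -> a \in A -> Pt (x * a)%g = Pt x *m Pt a.
Proof. by case: HPt => _ _ _ _ + Kx Aa => /(_ x a Kx Aa)[]. Qed.

Lemma proj_repMl x a : x \in K -> a \in A -> Pt (a * x)%g = Pt a *m Pt x.
Proof. by case: HPt => _ _ _ _ + Kx Aa => /(_ x a Kx Aa)[]. Qed.

Lemma proj_rep_tr a : a \in A -> \tr (Pt a) = th a.
Proof. by case: HPt => _ _ _ [_ _ +] _; apply. Qed.

Lemma proj_rep_dim_neq0 : m%:R != 0 :> algC.
Proof. by case: HPt => <- *; case/irrP: th_irr => i ->; apply: irr1_neq0. Qed.

Lemma factor_set_cancel x c d : x \in K -> c *: Pt x = d *: Pt x -> c = d.
Proof. by move/proj_rep_unit; apply: scalemx_unitmx_inj proj_rep_dim_neq0. Qed.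

Lemma factor_set1r x : x \in K -> al x 1%g = 1.
Proof.
move=> Kx; apply: (@factor_set_cancel x) => //.
by have := proj_repM Kx (group1 K); rewrite proj_rep1 mulmx1 mulg1 scale1r => <-.
Qed.

Lemma factor_set1l x : x \in K -> al 1%g x = 1.
Proof.
move=> Kx; apply: (@factor_set_cancel x) => //.
by have := proj_repM (group1 K) Kx; rewrite proj_rep1 mul1mx mul1g scale1r => <-.
Qed.

Let sAK : A \subset K. Proof. exact: normal_sub. Qed.

Lemma factor_setMr x y a : x \in K -> y \in K -> a \in A -> al x (y * a)%g = al x y.
Proof.
move=> Kx Ky Aa; have Ka := subsetP sAK a Aa.
apply: (@factor_set_cancel (x * y * a)%g); first by rewrite !groupM.
rewrite -mulgA -proj_repM ?groupM // proj_repMr // mulmxA proj_repM //.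
by rewrite -scalemxAl -proj_repMr ?groupM // mulgA.
Qed.

Lemma factor_setMl x y a : x \in K -> y \in K -> a \in A -> al (x * a)%g y = al x y.
Proof.
move=> Kx Ky Aa; have Ka := subsetP sAK a Aa.
have Aay : (a ^ y)%g \in A by rewrite memJ_norm // (subsetP (normal_norm nAK)).
apply: (@factor_set_cancel (x * a * y)%g); first by rewrite !groupM.
rewrite -proj_repM ?groupM // proj_repMr // -mulmxA -proj_repMl // proj_repM ?groupM //.
by rewrite mulgA; congr (_ *: _); rewrite conjgC factor_setMr.
Qed.

Lemma factor_set_cosets x y a b : x \in K -> y \in K -> a \in A -> b \in A ->
  al (x * a)%g (y * b)%g = al x y.
Proof.
move=> Kx Ky Aa Ab; have Kb := subsetP sAK b Ab.
by rewrite factor_setMl ?factor_setMr ?groupM.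
Qed.

End FactorSet.

Lemma subset_mul_normal (gT : finGroupType) (G N H K M : {group gT}) :
  (N <| G)%g -> K \subset G -> M \subset N -> (N * H)%g = G ->
  H \subset (K * M)%g -> G \subset (K * N)%g.
Proof.
move=> nNG sKG sMN defG sHKM; rewrite -defG; apply: subset_trans (mulgS N sHKM) _.
rewrite mulgA -(normC (subset_trans sKG (normal_norm nNG))) -mulgA.
by rewrite (mulGSid sMN).
Qed.

Lemma lcosetI_nonempty (gT : finGroupType) (K N : {group gT}) x :
  x \in (K * N)%g -> exists u, u \in (K :&: x *: N)%g.
Proof.
case/mulsgP=> k n Kk Nn ->; exists k.
by rewrite inE Kk mem_lcoset invMg mulgKV groupV.
Qed.

Section InducedProjRep.
Variables (gT : finGroupType) (G N K A : {group gT}).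
Hypotheses (nNG : (N <| G)%g) (sKG : K \subset G) (sGKN : G \subset (K * N)%g).
Hypothesis defA : A :=: K :&: N.
Variables (th : 'CF(A)) (m : nat) (Pt : gT -> 'M[algC]_m) (al : gT -> gT -> algC).
Hypotheses (th_irr : th \in irr A) (HPt : proj_rep_assoc K th Pt al).

Let sNG : N \subset G. Proof. exact: normal_sub. Qed.
Let sAN : A \subset N. Proof. by rewrite defA subsetIr. Qed.
Let sAK : A \subset K. Proof. by rewrite defA subsetIl. Qed.
Let nAK : (A <| K)%g. Proof. by rewrite defA (normalGI sKG nNG). Qed.

Definition rtrans (a : 'I_#|N : A|%g) : gT := repr (enum_val a).

Lemma rcoset_rtrans a : enum_val a = (A :* rtrans a)%g.
Proof.
rewrite /rtrans; have /rcosetsP[x _ ->] := enum_valP a.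
by apply/esym/rcoset_eqP/(mem_repr x)/rcoset_refl.
Qed.

Lemma rtrans_mem a : rtrans a \in N.
Proof.
have /rcosetsP[x Nx defa] := enum_valP a.
have : rtrans a \in (A :* x)%g by rewrite -defa rcoset_rtrans rcoset_refl.
by case/rcosetP=> y Ay ->; rewrite groupM // (subsetP sAN).
Qed.

Lemma rtrans_inj a b : (rtrans a * (rtrans b)^-1 \in K)%g -> a = b.
Proof.
move=> Kab; apply: enum_val_inj; rewrite !rcoset_rtrans; apply/rcoset_eqP.
by rewrite mem_rcoset defA inE Kab groupM ?groupV ?rtrans_mem.
Qed.

Lemma rtrans_exists x : x \in G -> exists b, (x * (rtrans b)^-1 \in K)%g.
Proof.
case/(subsetP sGKN)/mulsgP=> k n Kk Nn ->.
have An : (A :* n)%g \in rcosets A N by apply/rcosetsP; exists n.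
set b := enum_rank_in An (A :* n)%g; exists b.
have : rtrans b \in enum_val b by rewrite rcoset_rtrans rcoset_refl.
rewrite enum_rankK_in // mem_rcoset => Ab.
by rewrite -mulgA groupM // -(invgK n) -invMg groupV (subsetP sAK).
Qed.

Lemma rtrans_uniq x b c :
  (x * (rtrans b)^-1 \in K)%g -> (x * (rtrans c)^-1 \in K)%g -> b = c.
Proof.
move=> Kb Kc; apply: rtrans_inj.
have -> : (rtrans b * (rtrans c)^-1 = (x * (rtrans b)^-1)^-1 * (x * (rtrans c)^-1))%g.
  by rewrite invMg invgK -mulgA mulKg.
by rewrite groupM ?groupV.
Qed.

Lemma rtrans_lcoset g a b : g \in G -> (rtrans a * g * (rtrans b)^-1 \in g *: N)%g.
Proof.
move=> Gg; rewrite mem_lcoset mulgA -conjgE.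
have nNg := subsetP (normal_norm nNG) g Gg.
by rewrite groupM ?groupV ?rtrans_mem // memJ_norm ?rtrans_mem.
Qed.

Lemma lcosetI_div g u v :
  (u \in K :&: g *: N)%g -> (v \in K :&: g *: N)%g -> (u^-1 * v \in A)%g.
Proof.
rewrite !inE !mem_lcoset defA inE => /andP[Ku Nu] /andP[Kv Nv].
rewrite groupM ?groupV //= -[u](mulKVg g) invMg -mulgA.
by rewrite groupM ?groupV.
Qed.

Definition ind_factor_set (g h : gT) : algC :=
  al (repr (K :&: g *: N)%g) (repr (K :&: h *: N)%g).

Lemma ind_factor_setE g h u v : (u \in K :&: g *: N)%g -> (v \in K :&: h *: N)%g ->
  ind_factor_set g h = al u v.
Proof.
move=> Hu Hv; have Hu' := mem_repr u Hu; have Hv' := mem_repr v Hv.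
have [[Ku' _] [Kv' _]] := (setIP Hu', setIP Hv').
rewrite /ind_factor_set -(mulKVg (repr (K :&: g *: N)%g) u).
rewrite -(mulKVg (repr (K :&: h *: N)%g) v) (factor_set_cosets nAK th_irr HPt) //.
  exact: lcosetI_div Hu' Hu.
exact: lcosetI_div Hv' Hv.
Qed.

Lemma ind_factor_set_neq0 g h : g \in G -> h \in G -> ind_factor_set g h != 0.
Proof.
move=> Gg Gh; have [u Hu] := lcosetI_nonempty (subsetP sGKN g Gg).
have [v Hv] := lcosetI_nonempty (subsetP sGKN h Gh).
rewrite (ind_factor_setE Hu Hv) (factor_set_neq0 HPt) //.
  by case/setIP: Hu.
by case/setIP: Hv.
Qed.

Lemma ind_factor_set_memNr g a : g \in G -> a \in N -> ind_factor_set g a = 1.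
Proof.
move=> Gg Na; have [u Hu] := lcosetI_nonempty (subsetP sGKN g Gg).
have H1 : (1 \in K :&: a *: N)%g by rewrite inE group1 mem_lcoset mulg1 groupV.
by rewrite (ind_factor_setE Hu H1) (factor_set1r th_irr HPt) //; case/setIP: Hu.
Qed.

Lemma ind_factor_set_memNl g a : g \in G -> a \in N -> ind_factor_set a g = 1.
Proof.
move=> Gg Na; have [u Hu] := lcosetI_nonempty (subsetP sGKN g Gg).
have H1 : (1 \in K :&: a *: N)%g by rewrite inE group1 mem_lcoset mulg1 groupV.
by rewrite (ind_factor_setE H1 Hu) (factor_set1l th_irr HPt) //; case/setIP: Hu.
Qed.

Definition ind_block g a b : 'M[algC]_m :=
  let y := (rtrans a * g * (rtrans b)^-1)%g in if y \in K then Pt y else 0.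

Definition ind_proj_rep g := \mxblock_(a, b) ind_block g a b.

Lemma ind_blockM g h a b : g \in G -> h \in G ->
  \sum_c ind_block g a c *m ind_block h c b
    = ind_factor_set g h *: ind_block (g * h)%g a b.
Proof.
move=> Gg Gh; have Gag : (rtrans a * g \in G)%g.
  by rewrite groupM // (subsetP sNG) ?rtrans_mem.
have [c Kc] := rtrans_exists Gag.
rewrite (bigD1 c) //= big1 ?addr0 => [|c' ne_c'c]; last first.
  rewrite /ind_block; case: ifP => [Kc'|_]; last by rewrite mul0mx.
  by rewrite (rtrans_uniq Kc' Kc) eqxx in ne_c'c.
rewrite /ind_block; set u := (rtrans a * g * (rtrans c)^-1)%g in Kc *.
set v := (rtrans c * h * (rtrans b)^-1)%g.
have -> : (rtrans a * (g * h) * (rtrans b)^-1 = u * v)%g by rewrite !mulgA mulgKV.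
rewrite Kc groupMl //; case: ifP => Kv; last first.
  by rewrite mulmx0 scaler0.
rewrite (proj_repM HPt) //; congr (_ *: _); apply/esym/ind_factor_setE.
  by rewrite inE Kc rtrans_lcoset.
by rewrite inE Kv rtrans_lcoset.
Qed.

Lemma ind_proj_repM g h : g \in G -> h \in G ->
  ind_proj_rep g *m ind_proj_rep h = ind_factor_set g h *: ind_proj_rep (g * h)%g.
Proof.
move=> Gg Gh; rewrite mul_mxblock -mxblockZ.
by apply/eq_mxblock => a b; rewrite ind_blockM.
Qed.

Lemma ind_proj_rep_cent c : c \in K -> c \in 'C(N)%g ->
  ind_proj_rep c = \mxdiag_a Pt c.
Proof.
move=> Kc cNc; apply/eq_mxblock => a b; rewrite /ind_block.
rewrite -(centP cNc _ (rtrans_mem a)) -mulgA groupMl //.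
have [<-|ne_ab] := eqVneq a b; first by rewrite mulgV mulg1 group1 conform_mx_id.
by case: ifP => // /rtrans_inj eq_ab; rewrite eq_ab eqxx in ne_ab.
Qed.

Lemma ind_proj_rep1 : ind_proj_rep 1%g = 1%:M.
Proof. by rewrite ind_proj_rep_cent ?group1 // (proj_rep1 HPt) mxdiagZ. Qed.

Lemma ind_proj_rep_unit g : g \in G -> ind_proj_rep g \in unitmx.
Proof.
move=> Gg; have Gg' := groupVr Gg.
suff /mulmx1_unit[] : ind_proj_rep g *m
    ((ind_factor_set g g^-1)^-1 *: ind_proj_rep g^-1) = 1%:M by [].
rewrite -scalemxAr ind_proj_repM // mulgV ind_proj_rep1 scalerA mulVf ?scale1r //.
exact: ind_factor_set_neq0.
Qed.

Lemma ind_proj_repMr g a : g \in G -> a \in N ->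
  ind_proj_rep (g * a)%g = ind_proj_rep g *m ind_proj_rep a.
Proof.
move=> Gg Na; have Ga := subsetP sNG a Na.
by rewrite ind_proj_repM // ind_factor_set_memNr // scale1r.
Qed.

Lemma ind_proj_repMl g a : g \in G -> a \in N ->
  ind_proj_rep (a * g)%g = ind_proj_rep a *m ind_proj_rep g.
Proof.
move=> Gg Na; have Ga := subsetP sNG a Na.
by rewrite ind_proj_repM // ind_factor_set_memNl // scale1r.
Qed.

Lemma mxtrace_ind_proj_rep x : x \in N ->
  \tr (ind_proj_rep x) = \sum_a th (rtrans a * x * (rtrans a)^-1)%g.
Proof.
move=> Nx; rewrite mxtrace_mxblock; apply: eq_bigr => a _; rewrite /ind_block.
have Nxa : (rtrans a * x * (rtrans a)^-1 \in N)%g by rewrite !groupM ?groupV ?rtrans_mem.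
case: ifP => Kxa; first by rewrite (proj_rep_tr HPt) // defA inE Kxa.
by rewrite mxtrace0 cfun0 // defA inE Kxa.
Qed.

Lemma cfInd_transversal x :
  'Ind[N] th x = \sum_a th (rtrans a * x * (rtrans a)^-1)%g.
Proof.
(* After y |-> y^-1, the sum over N splits along the right cosets A t_a. *)
rewrite cfIndE // (reindex_inj invg_inj) /=.
rewrite (eq_bigl (mem N)) => [|y]; last by rewrite /= groupV.
rewrite (set_partition_big _ (rcosets_partition sAN)) /= big_enum_val /=.
rewrite (eq_bigr (fun a => #|A|%:R * th (rtrans a * x * (rtrans a)^-1)%g)).
  by rewrite -mulr_sumr mulKf ?neq0CG.
move=> a _; rewrite rcoset_rtrans -rcosetE big_imset /=; last exact: in2W (mulIg _).
rewrite (eq_bigr (fun _ => th (rtrans a * x * (rtrans a)^-1)%g)).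
  by rewrite sumr_const mulr_natl.
move=> z Az; rewrite invMg conjgM cfunJ ?groupV //.
by rewrite conjgE invgK mulgA.
Qed.

Lemma cfInd1_dim : 'Ind[N] th 1%g = (\sum_(a < #|N : A|%g) m)%:R.
Proof.
by case: HPt => th1 *; rewrite cfInd1 // th1 sum_nat_const card_ord natrM.
Qed.

Lemma ind_dim_neq0 : (\sum_(a < #|N : A|%g) m)%:R != 0 :> algC.
Proof.
rewrite sum_nat_const card_ord natrM mulf_neq0 ?(proj_rep_dim_neq0 th_irr HPt) //.
by rewrite pnatr_eq0 -lt0n indexg_gt0.
Qed.

Lemma ind_proj_rep_assoc :
  proj_rep_assoc G ('Ind[N] th) ind_proj_rep ind_factor_set.
Proof.
split.
- exact: cfInd1_dim.
- exact: ind_proj_rep_unit.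
- by move=> x y Gx Gy; rewrite ind_factor_set_neq0 // ind_proj_repM.
- split; first exact: ind_proj_rep1.
    by move=> x y Nx Ny; rewrite ind_proj_repMr ?(subsetP sNG).
  by move=> x Nx; rewrite mxtrace_ind_proj_rep // cfInd_transversal.
- by move=> x a Gx Na; rewrite ind_proj_repMr ?ind_proj_repMl.
Qed.

Lemma cfInd_invariant : {in K, forall k, (th ^ k)%CF = th} ->
  {in G, forall g, ('Ind[N] th ^ g)%CF = 'Ind[N] th}.
Proof.
move=> thK _ /(subsetP sGKN)/mulsgP[k n Kk Nn ->].
have nNG' := subsetP (normal_norm nNG).
have [nNk nNn] := (nNG' k (subsetP sKG k Kk), nNG' n (subsetP sNG n Nn)).
rewrite cfConjgMnorm // cfConjgInd_norm ?(subsetP (normal_norm nAK)) // thK //.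
exact: cfConjg_id.
Qed.

Hypothesis Ind_irr : 'Ind[N] th \in irr N.

Lemma ind_proj_rep_mx_repr : mx_repr N ind_proj_rep.
Proof.
by split=> [|x y Nx Ny]; rewrite ?ind_proj_rep1 ?ind_proj_repMr ?(subsetP sNG).
Qed.

Lemma ind_proj_rep_irr : mx_irreducible (MxRepresentation ind_proj_rep_mx_repr).
Proof.
have /irr_reprP[rI irr_rI defInd] := Ind_irr.
apply: mx_rsim_irr irr_rI; apply/cfRepr_rsimP; rewrite -defInd.
apply/eqP/cfun_inP => x Nx.
by rewrite cfunE Nx mulr1n /= mxtrace_ind_proj_rep // cfInd_transversal.
Qed.

Lemma cent_sub_supplement : 'C_G(N)%g \subset K.
Proof.
apply/subsetP => c /setIP[Gc cNc]; apply/idPn => notKc.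
have /is_scalar_mxP[s defPc] : is_scalar_mx (ind_proj_rep c).
  apply: mx_abs_irr_cent_scalar (groupC ind_proj_rep_irr) _ _.
  apply/centgmxP => x Nx /=.
  by rewrite -ind_proj_repMr // -ind_proj_repMl // (centP cNc).
have tr0 : \tr (ind_proj_rep c) = 0.
  rewrite mxtrace_mxblock big1 // => a _; rewrite /ind_block.
  by rewrite -(centP cNc _ (rtrans_mem a)) mulgK (negPf notKc) mxtrace0.
have s0 : s = 0.
  move: tr0; rewrite defPc mxtrace_scalar -mulr_natr => /eqP.
  by rewrite mulf_eq0 (negPf ind_dim_neq0) orbF => /eqP.
suff : (1 : algC) = 0 by move/eqP; rewrite oner_eq0.
apply: (scalemx_unitmx_inj ind_dim_neq0 (ind_proj_rep_unit Gc)).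
by rewrite defPc s0 scale1r scale0r -scalemx1 scale0r.
Qed.

Lemma ind_proj_rep_scalar c s : c \in 'C_G(N)%g -> Pt c = s%:M ->
  ind_proj_rep c = s%:M.
Proof.
move=> cGNc Ptc; have /setIP[_ cNc] := cGNc.
by rewrite ind_proj_rep_cent ?(subsetP cent_sub_supplement) // Ptc mxdiagZ.
Qed.

Lemma induced_proj_rep : exists n (P : gT -> 'M[algC]_n) (alpha : gT -> gT -> algC),
  [/\ proj_rep_assoc G ('Ind[N] th) P alpha,
      forall g h u v, (u \in K :&: g *: N)%g -> (v \in K :&: h *: N)%g ->
        alpha g h = al u v,
      'C_G(N)%g \subset K
    & forall c s, c \in 'C_G(N)%g -> Pt c = s%:M -> P c = s%:M].
Proof.
exists _, ind_proj_rep, ind_factor_set; split.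
- exact: ind_proj_rep_assoc.
- exact: ind_factor_setE.
- exact: cent_sub_supplement.
- exact: ind_proj_rep_scalar.
Qed.

End InducedProjRep.

Theorem lemma2p1 (gT : finGroupType) (G N Gt H : {group gT})
    (tht : 'CF((Gt :&: N)%G)) (phit : 'CF((Gt :&: (N :&: H))%G)) :
  (N <| G)%g -> Gt \subset G -> H \subset G ->
  (N * H)%g = G :> {set gT} ->
  ((Gt :&: H) * (N :&: H))%g = H :> {set gT} ->
  ('C_G(N) \subset H)%g ->
  tht \in irr (Gt :&: N)%G ->
  phit \in irr (Gt :&: (N :&: H))%G ->
  'Ind[N] tht \in irr N ->
  'Ind[(N :&: H)%G] phit \in irr (N :&: H)%G ->
  ge_c Gt tht (Gt :&: H)%G phit ->
  (forall J : {group gT}, N \subset J -> J \subset G ->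
     ind_bij (J :&: Gt)%G tht J ('Ind[N] tht) /\
     ind_bij ((J :&: Gt) :&: H)%G phit (J :&: H)%G
             ('Ind[(N :&: H)%G] phit)) ->
  ge_c G ('Ind[N] tht) H ('Ind[(N :&: H)%G] phit).
Proof.
move=> nNG sGtG sHG defG defH sCH tht_irr phit_irr Indt_irr Indp_irr.
case=> [[_ _ thtJ] [_ _ phitJ] _ [n [m [Pt [al [Pt' [al' [HPt HPt' eq_al Pt_scalar]]]]]]]].
move=> _.
have nMH : (N :&: H <| H)%g by rewrite setIC (normalGI sHG nNG).
have sHGtM : H \subset ((Gt :&: H) * (N :&: H))%g by rewrite defH.
have sGGtN : G \subset (Gt * N)%g.
  apply: subset_mul_normal nNG sGtG (subsetIl N H) defG _.
  exact: subset_trans sHGtM (mulSg _ (subsetIl Gt H)).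
have defM : Gt :&: (N :&: H) = (Gt :&: H) :&: (N :&: H) by rewrite setIACA setIid setIA.
have [n1 [P1 [a1 [HP1 a1E sCGt P1c]]]] :=
  induced_proj_rep nNG sGtG sGGtN (erefl _) tht_irr HPt Indt_irr.
have [n2 [P2 [a2 [HP2 a2E _ P2c]]]] :=
  induced_proj_rep nMH (subsetIr Gt H) sHGtM defM phit_irr HPt' Indp_irr.
split; [split=> // | split=> // | by split | exists n1, n2, P1, a1, P2, a2; split=> //].
- exact: (cfInd_invariant nNG sGtG sGGtN (erefl _) thtJ).
- exact: (cfInd_invariant nMH (subsetIr Gt H) sHGtM defM phitJ).
- move=> x y Hx Hy.
  have sub_lcosetI z : ((Gt :&: H) :&: z *: (N :&: H) \subset Gt :&: z *: N)%g.
    by apply: setISS; rewrite ?subsetIl // lcosetS subsetIl.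
  have [u Hu] := lcosetI_nonempty (subsetP sHGtM x Hx).
  have [v Hv] := lcosetI_nonempty (subsetP sHGtM y Hy).
  rewrite (a1E _ _ u v) ?(subsetP (sub_lcosetI _)) // (a2E _ _ u v) //.
  by apply: eq_al; [case/setIP: Hu | case/setIP: Hv].
move=> c cGNc; have [_ cNc] := setIP cGNc.
have [s [Ptc Pt'c]] : exists s, Pt c = s%:M /\ Pt' c = s%:M.
  by apply: Pt_scalar; rewrite inE (subsetP sCGt) // (subsetP (centS (subsetIr Gt N))).
exists s; split; first exact: P1c Ptc.
by apply: P2c Pt'c; rewrite inE (subsetP sCH) // (subsetP (centS (subsetIl N H))).
Qed.
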